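(* Let $\alpha\in(2/3,1)$. If there exists an $\varepsilon$-differentially private online algorithm that at time step $j$ outputs $\hat F_e(j,\alpha)$ and achieves $(\delta,\gamma)$-utility with respect to the exponential decay sum $F_e(j,\alpha)=\sum_{i=1}^j x_i\alpha^{j-i}$, then $$\delta\ge\Omega\!\left(\min\left\{\frac{\alpha}{1-\alpha},\ \frac{\log(1/\gamma)}{\varepsilon}\right\}\right).$$
   Context: Online model: at each time step $i$ a randomized online algorithm receives $x_i\in[0,1]$ and outputs a real number $\hat F(x_1,\ldots,x_i)$. It is $\varepsilon$-differentially private (under continual observation) if for all $T$, all measurable $S\subseteq\mathbb{R}^T$, all inputs $x_1,\ldots,x_T\in[0,1]$, all $j\le T$ and all $x_j'\in[0,1]$, $\Pr[(\hat F(x_1,\ldots,x_j,\ldots,x_k))_{k=1}^T\in S]\le e^{\varepsilon}\Pr[(\hat F(x_1,\ldots,x_j',\ldots,x_k))_{k=1}^T\in S]$ (second sequence computed on the input with $x_j$ replaced by $x_j'$). It achieves $(\delta,\gamma)$-utility with respect to $F$ if for all inputs and all $j$, $\Pr[|\hat F(x_1,\ldots,x_j)-F(x_1,\ldots,x_j)|>\delta]<\gamma$. *)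

From HB Require Import structures.
From mathcomp Require Import all_boot all_order all_algebra.
From mathcomp Require Import all_classical all_reals all_analysis.
Set Implicit Arguments. Unset Strict Implicit. Unset Printing Implicit Defensive.
Import Order.TTheory GRing.Theory Num.Theory.
Local Open Scope classical_set_scope.
Local Open Scope ring_scope.

Definition expdecay (R : realType) (alpha : R) (s : seq R) : R :=
  \sum_(i < size s) s`_i * alpha ^+ (size s - 1 - i).

Definition unit_input (R : realType) (s : seq R) : Prop :=
  forall i, (i < size s)%N -> 0 <= s`_i <= 1.

Definition coord_sets (R : realType) (T : nat) : set (set ('I_T -> R)) :=
  [set A | exists (i : 'I_T) (B : set R), measurable B /\ A = (fun f => f i) @^-1` B].

Definition measurable_RT (R : realType) (T : nat) (S : set ('I_T -> R)) : Prop :=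
  <<s @coord_sets R T >> S.

(* A randomized online algorithm is modelled by a probability space
   (Omega, P) of internal randomness and a map A : seq R -> Omega -> R,
   where A [:: x_1; ...; x_k] w is the output \hat F(x_1,...,x_k) at time k
   (the output at time k depends only on the input received so far). *)

Definition outputs (R : realType) d (Omega : measurableType d)
  (A : seq R -> Omega -> R) (x : seq R) (w : Omega) : 'I_(size x) -> R :=
  fun k => A (take k.+1 x) w.

Definition online_dp (R : realType) d (Omega : measurableType d)
  (P : probability Omega R) (A : seq R -> Omega -> R) (eps : R) : Prop :=
  forall (x : seq R) (j : nat) (y : R) (S : set ('I_(size x) -> R)),
    unit_input x -> (j < size x)%N -> 0 <= y <= 1 ->
    measurable_RT S ->
    (P [set w | S (@outputs R d Omega A x w)] <=
     (expR eps)%:E *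
       P [set w | S (fun k : 'I_(size x) => A (take k.+1 (set_nth 0%R x j y)) w)])%E.

Definition utility (R : realType) d (Omega : measurableType d)
  (P : probability Omega R) (A : seq R -> Omega -> R) (F : seq R -> R)
  (delta gamma : R) : Prop :=
  forall s : seq R, s != [::] -> unit_input s ->
    (P [set w | (delta < `|A s w - F s|)%R] < gamma%:E)%E.

From HB Require Import structures.
From mathcomp Require Import all_boot all_order all_algebra.
From mathcomp Require Import all_classical all_reals all_analysis.
From mathcomp Require Import lra.
Set Implicit Arguments. Unset Strict Implicit. Unset Printing Implicit Defensive.
Import Order.TTheory GRing.Theory Num.Theory.
Local Open Scope classical_set_scope.
Local Open Scope ring_scope.

(* Run the algorithm on the inputs 1^t 0^(n-t) for t = n, n-1, ..., 0.
   Consecutive inputs differ in one entry, so by privacy the probability that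
   the last output lies in a fixed Borel set grows by at most a factor e^eps
   per step, hence by e^(n eps) from 0^n to 1^n.  If the true answers on 1^n
   and 0^n are more than 2 delta apart, the output on 1^n is delta-accurate
   with probability >= 1 - gamma, but the same event makes the output on 0^n
   inaccurate, which has probability < gamma: so 1 - gamma <= e^(n eps) gamma.
   For the exponential decay sum, F(1^n) >= n alpha^n >= n/2 as long as
   n (1 - alpha) <= 1/2; taking n ~ min(alpha/(1-alpha), log(1/gamma)/eps)
   makes e^(n eps) gamma small, so that necessarily 2 delta >= n/2. *)

Lemma bernoulli_ineq_subr (R : realDomainType) (h : R) (k : nat) : h <= 1 ->
  1 - k%:R * h <= (1 - h) ^+ k.
Proof.
move=> h1; elim: k => [|k IH]; first by rewrite mul0r subr0 expr0.
rewrite exprS -natr1.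
have h1' : 0 <= 1 - h by rewrite subr_ge0.
apply: le_trans (ler_wpM2l h1' IH).
have : 0 <= k%:R * (h * h) by rewrite mulr_ge0 ?ler0n -?expr2 ?sqr_ge0.
lra.
Qed.

Lemma expRN1_le_half (R : realType) : expR (-1) <= 1 / 2 :> R.
Proof.
rewrite expRN div1r lef_pV2 ?posrE ?expR_gt0 //.
by have := expR_ge1Dx (1 : R); lra.
Qed.

Lemma measurable_dist_gt (R : realType) (a b : R) :
  measurable [set r : R | a < `|r - b|].
Proof.
have -> : [set r : R | a < `|r - b|] =
    [set` `]b + a, +oo[%R] `|` [set` `]-oo, b - a[%R].
  apply/seteqP; split => r /=.
    rewrite ltr_normr => /orP[h|h]; [left|right]; rewrite /= in_itv /= ?andbT; lra.
  case=> /=; rewrite in_itv /= ?andbT => h; rewrite ltr_normr; apply/orP;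
    [left|right]; lra.
by apply: measurableU; apply: measurable_itv.
Qed.

Definition ones_prefix (R : realType) (n t : nat) : seq R :=
  mkseq (fun i => if (i < t)%N then 1 else 0) n.

Section OnesPrefix.
Variable R : realType.

Lemma size_ones_prefix n t : size (ones_prefix R n t) = n.
Proof. exact: size_mkseq. Qed.

Lemma unit_input_ones_prefix n t : unit_input (ones_prefix R n t).
Proof.
move=> i; rewrite size_ones_prefix => iN; rewrite nth_mkseq //.
by case: ifP => _; rewrite ?lexx ?ler01.
Qed.

Lemma set_nth_ones_prefix n t : (t < n)%N ->
  set_nth 0 (ones_prefix R n t.+1) t 0 = ones_prefix R n t.
Proof.
move=> tn; apply: (@eq_from_nth _ 0).
  by rewrite size_set_nth !size_ones_prefix; apply/maxn_idPr.
move=> i; rewrite size_set_nth size_ones_prefix (maxn_idPr tn) => iN.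
rewrite nth_set_nth /= !nth_mkseq //.
case: eqP => [->|/eqP ne]; first by rewrite ltnn.
by rewrite ltnS leq_eqVlt (negbTE ne).
Qed.

Lemma expdecay_zeros (alpha : R) n : expdecay alpha (ones_prefix R n 0) = 0.
Proof.
rewrite /expdecay big1 // => i _.
have := ltn_ord i; rewrite {2}size_ones_prefix => iN.
by rewrite nth_mkseq // mul0r.
Qed.

Lemma expdecay_ones_ge (alpha : R) n : 0 <= alpha <= 1 ->
  n%:R * (1 - n%:R * (1 - alpha)) <= expdecay alpha (ones_prefix R n n).
Proof.
move=> /andP[a0 a1].
have -> : expdecay alpha (ones_prefix R n n) = \sum_(i < n) alpha ^+ (n - 1 - i).
  rewrite /expdecay size_ones_prefix; apply: eq_bigr => i _.
  by rewrite nth_mkseq // ltn_ord mul1r.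
apply: le_trans (_ : \sum_(i < n) (1 - n%:R * (1 - alpha)) <= _).
  by rewrite sumr_const card_ord mulr_natl.
apply: ler_sum => i _.
have /le_trans -> // : 1 - n%:R * (1 - alpha) <= alpha ^+ n.
  by have := @bernoulli_ineq_subr R (1 - alpha) n; rewrite subKr; apply; lra.
by apply: ler_wiXn2l => //; rewrite -subnDA leq_subr.
Qed.

End OnesPrefix.

Section PrivacyUtilityTradeoff.
Variables (R : realType) (d : measure_display) (Omega : measurableType d).
Variables (P : probability Omega R) (A : seq R -> Omega -> R) (eps : R).
Hypothesis dpA : online_dp P A eps.

Lemma online_dp_last (x : seq R) (j : nat) (y : R) (B : set R) :
  unit_input x -> (j < size x)%N -> 0 <= y <= 1 -> measurable B ->
  (P (A x @^-1` B) <= (expR eps)%:E * P (A (set_nth 0%R x j y) @^-1` B))%E.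
Proof.
move=> ux jx y01 mB.
have last_lt : ((size x).-1 < size x)%N by rewrite prednK // (leq_ltn_trans _ jx).
pose last_out : 'I_(size x) := Ordinal last_lt.
have last_outS : last_out.+1 = size x by rewrite /= prednK // (leq_ltn_trans _ jx).
have mS : measurable_RT ((fun f : 'I_(size x) -> R => f last_out) @^-1` B).
  by apply: sub_gen_smallest; exists last_out, B.
have := @dpA x j y _ ux jx y01 mS; rewrite /outputs /= last_outS take_size take_oversize //.
by rewrite size_set_nth (maxn_idPr jx).
Qed.

Lemma online_dp_ones_prefix (n t : nat) (B : set R) : (t <= n)%N -> measurable B ->
  (P (A (ones_prefix R n t) @^-1` B) <=
   ((expR eps) ^+ t)%:E * P (A (ones_prefix R n 0) @^-1` B))%E.
Proof.
move=> + mB; elim: t => [|t IH] tn; first by rewrite expr0 mul1e.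
have h01 : 0 <= (0 : R) <= 1 by rewrite lexx ler01.
have := @online_dp_last (ones_prefix R n t.+1) t 0 B (@unit_input_ones_prefix _ _ _).
rewrite size_ones_prefix set_nth_ones_prefix // => /(_ tn h01 mB) /le_trans; apply.
rewrite exprS EFinM -muleA; apply: lee_wpmul2l; first by rewrite lee_fin expR_ge0.
exact/IH/ltnW.
Qed.

Lemma online_dp_utility_tradeoff (F : seq R -> R) (delta gamma : R) (n : nat) :
  (forall s, measurable_fun setT (A s)) -> utility P A F delta gamma -> (0 < n)%N ->
  2 * delta < `|F (ones_prefix R n n) - F (ones_prefix R n 0)| ->
  1 - gamma <= (expR eps) ^+ n * gamma.
Proof.
move=> mA ut n0 far.
have ne t : ones_prefix R n t != [::] by rewrite -size_eq0 size_ones_prefix -lt0n.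
have mbad s b : measurable [set w | delta < `|A s w - b|].
  by rewrite -[X in measurable X]setTI; exact: mA _ measurableT _ (measurable_dist_gt delta b).
set F1 := F (ones_prefix R n n); set F0 := F (ones_prefix R n 0).
set B := ~` [set r | delta < `|r - F1|].
have good1 : ((1 - gamma)%:E <= P (A (ones_prefix R n n) @^-1` B))%E.
  rewrite (probability_setC _ (mbad _ _)).
  have := ut _ (ne n) (@unit_input_ones_prefix _ _ _).
  rewrite -(fineK (fin_num_measure P _ (mbad _ F1))) lte_fin -EFinB lee_fin.
  rewrite /F1; lra.
have bad0 : (P (A (ones_prefix R n 0) @^-1` B) < gamma%:E)%E.
  apply: le_lt_trans (ut _ (ne 0) (@unit_input_ones_prefix _ _ _)).
  apply: le_measure; rewrite ?inE; [exact/measurableC/mbad|exact: mbad|].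
  move=> w /= /negP; rewrite -leNgt => near1.
  have := ler_distD (A (ones_prefix R n 0) w) F1 F0.
  rewrite [`|F1 - A _ w|]distrC; move: far; rewrite -/F1 -/F0; lra.
have chain := online_dp_ones_prefix (leqnn n) (measurableC (measurable_dist_gt delta F1)).
rewrite -lee_fin; apply: le_trans good1 (le_trans chain _); rewrite EFinM.
by apply: lee_wpmul2l; [rewrite lee_fin exprn_ge0 ?expR_ge0 | exact: ltW bad0].
Qed.

End PrivacyUtilityTradeoff.

Lemma exists_window_length (R : realType) (alpha eps L : R) :
  2 / 3 < alpha < 1 -> 0 < eps <= 1 -> 2 <= L ->
  exists2 n : nat, (0 < n)%N &
    [/\ 2 * eps * n%:R <= L, 2 * (1 - alpha) * n%:R <= 1
      & Num.min (alpha / (1 - alpha)) (L / eps) <= 4 * n%:R].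
Proof.
move=> /andP[a1 a2] /andP[e0 e1] L2; have a0 : 0 < 1 - alpha by lra.
set x := Num.min (L / (2 * eps)) (1 / (2 * (1 - alpha))).
have x1 : 1 <= x by rewrite le_min !ler_pdivlMr ?mulr_gt0 //; apply/andP; split; lra.
have /andP[nx xn] := truncn_itv (le_trans ler01 x1).
have n0 : (0 < Num.truncn x)%N by rewrite truncn_gt0.
exists (Num.truncn x) => //; rewrite -natr1 in xn.
have n1 : 1 <= (Num.truncn x)%:R :> R by rewrite ler1n.
have [xL xa] : x <= L / (2 * eps) /\ x <= 1 / (2 * (1 - alpha)).
  by split; rewrite ge_min lexx ?orbT.
split.
- by have := le_trans nx xL; rewrite ler_pdivlMr ?mulr_gt0 //; lra.
- by have := le_trans nx xa; rewrite ler_pdivlMr ?mulr_gt0 //; lra.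
- set M := Num.min _ _.
  have [ML Ma] : M <= L / eps /\ M <= alpha / (1 - alpha).
    by split; rewrite ge_min lexx ?orbT.
  have Mx : M / 2 <= x.
    rewrite le_min !ler_pdivlMr ?mulr_gt0 //; apply/andP; split.
    + by move: ML; rewrite ler_pdivlMr //; lra.
    + by move: Ma; rewrite ler_pdivlMr //; lra.
  lra.
Qed.

Theorem corollary2 (R : realType) :
  exists c : R, 0 < c /\
  exists gamma0 : R, 0 < gamma0 /\
  exists eps0 : R, 0 < eps0 /\
  forall (d : measure_display) (Omega : measurableType d)
         (P : probability Omega R) (A : seq R -> Omega -> R)
         (alpha eps delta gamma : R),
    2 / 3 < alpha < 1 ->
    0 < eps <= eps0 ->
    0 < gamma <= gamma0 ->
    (forall s : seq R, measurable_fun setT (A s)) ->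
    online_dp P A eps ->
    utility P A (expdecay alpha) delta gamma ->
    c * Num.min (alpha / (1 - alpha)) (ln (1 / gamma) / eps) <= delta.
Proof.
exists (1 / 16); split; first by lra.
exists (expR (-2)); split; first exact: expR_gt0.
exists 1; split; first exact: ltr01.
move=> d Omega P A alpha eps delta gamma a01 e01 /andP[g0 g2] mA dpA ut.
set L := ln (1 / gamma).
have gL : gamma = expR (- L) by rewrite /L div1r lnV ?posrE // opprK lnK.
have L2 : 2 <= L by rewrite -lerN2 -ler_expR -gL.
have e1 := expRN1_le_half R.
have g4 : gamma <= 1 / 4.
  have e0 : 0 <= expR (-1) :> R := expR_ge0 _.
  move: g2; have -> : -2 = 2%:R * -1 :> R by lra.
  by rewrite expRM_natl; nra.
have [n n0 [nL na Mn]] := exists_window_length a01 e01 L2.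
have Fn : n%:R / 2 <= expdecay alpha (ones_prefix R n n).
  apply: le_trans (expdecay_ones_ge _ _); last by move: a01 => /andP[? ?]; lra.
  have : 0 <= n%:R :> R := ler0n _ _; nra.
have Fsmall : expdecay alpha (ones_prefix R n n) <= 2 * delta.
  rewrite leNgt; apply/negP => far.
  have : expR eps ^+ n * gamma <= 1 / 2.
    by rewrite -expRM_natl gL -expRD; apply: le_trans e1; rewrite ler_expR; lra.
  have far' : 2 * delta < `|expdecay alpha (ones_prefix R n n) -
                              expdecay alpha (ones_prefix R n 0)|.
    by rewrite expdecay_zeros subr0 (lt_le_trans far) ?ler_norm.
  have := online_dp_utility_tradeoff dpA mA ut n0 far'; lra.
lra.
Qed.
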